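(* Let $P$ be a simple polytope of dimension $n\leq 3$ and let $\lambda$ be a real characteristic matrix on $P$. Then there exists a characteristic matrix $\lambda'$ on $P$ whose reduction modulo $2$ equals $\lambda$.
   Context: Let $P$ be a simple $n$-polytope with facets $F_1,\ldots,F_m$. A characteristic matrix on $P$ is an integer $n\times m$ matrix $(\boldsymbol\lambda_1,\ldots,\boldsymbol\lambda_m)$ such that whenever $F_{i_1},\ldots,F_{i_n}$ meet at a vertex, $\det(\boldsymbol\lambda_{i_1},\ldots,\boldsymbol\lambda_{i_n})=\pm 1$. A real characteristic matrix on $P$ is an $n\times m$ matrix over $\mathbb{Z}/2$ satisfying the same condition with determinant $1\in\mathbb{Z}/2$. *)

From HB Require Import structures.
From mathcomp Require Import all_boot all_order all_algebra.
From mathcomp Require Export reals.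
Set Implicit Arguments. Unset Strict Implicit. Unset Printing Implicit Defensive.
Import Order.TTheory GRing.Theory Num.Theory.
Local Open Scope ring_scope.

Definition inP (R : realType) (n m : nat) (A : 'M[R]_(m, n)) (b : 'cV[R]_m)
  (x : 'cV[R]_n) : Prop :=
  forall i : 'I_m, (A *m x) i 0 <= b i 0.

Definition on_facet (R : realType) (n m : nat) (A : 'M[R]_(m, n)) (b : 'cV[R]_m)
  (i : 'I_m) (x : 'cV[R]_n) : Prop :=
  inP A b x /\ (A *m x) i 0 = b i 0.

Definition is_vertex (R : realType) (n m : nat) (A : 'M[R]_(m, n)) (b : 'cV[R]_m)
  (x : 'cV[R]_n) : Prop :=
  inP A b x /\
  forall (y z : 'cV[R]_n) (t : R), inP A b y -> inP A b z -> 0 < t < 1 ->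
    x = t *: y + (1 - t) *: z -> y = z.

(* (A, b) is an irredundant description of a simple n-polytope whose facets
   are exactly F_1, ..., F_m (pairwise distinct):
   - P is bounded;
   - P is full-dimensional (has an interior point);
   - each inequality defines a facet: a_i <> 0 and some point of P is tight
     exactly at inequality i (so F_i has dimension n-1 and the F_i are distinct);
   - simple: every vertex lies on exactly n facets. *)
Definition simple_polytope (R : realType) (n m : nat) (A : 'M[R]_(m, n))
  (b : 'cV[R]_m) : Prop :=
  [/\ (exists M : R, forall x, inP A b x -> forall j : 'I_n, `|x j 0| <= M),
      (exists x : 'cV[R]_n, forall i : 'I_m, (A *m x) i 0 < b i 0),
      (forall i : 'I_m, row i A != 0 /\
         exists x : 'cV[R]_n, (A *m x) i 0 = b i 0 /\
           forall j : 'I_m, j != i -> (A *m x) j 0 < b j 0) &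
      (forall v, is_vertex A b v ->
         #|[set i : 'I_m | (A *m v) i 0 == b i 0]| = n)].

Definition facets_meet_at_vertex (R : realType) (n m : nat) (A : 'M[R]_(m, n))
  (b : 'cV[R]_m) (f : 'I_n -> 'I_m) : Prop :=
  injective f /\ exists v, is_vertex A b v /\ forall k : 'I_n, on_facet A b (f k) v.

Definition characteristic_matrix (R : realType) (n m : nat) (A : 'M[R]_(m, n))
  (b : 'cV[R]_m) (L : 'M[int]_(n, m)) : Prop :=
  forall f : 'I_n -> 'I_m, facets_meet_at_vertex A b f ->
    \det (colsub f L) = 1 \/ \det (colsub f L) = -1.

Definition real_characteristic_matrix (R : realType) (n m : nat)
  (A : 'M[R]_(m, n)) (b : 'cV[R]_m) (L : 'M['F_2]_(n, m)) : Prop :=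
  forall f : 'I_n -> 'I_m, facets_meet_at_vertex A b f -> \det (colsub f L) = 1.

Definition mod2_mx (n m : nat) (L : 'M[int]_(n, m)) : 'M['F_2]_(n, m) :=
  map_mx (fun z : int => z%:~R) L.

From HB Require Import structures.
From mathcomp Require Import all_boot all_order all_algebra reals.
Set Implicit Arguments.
Import GRing.Theory.
Local Open Scope ring_scope.

(* Lift every entry of the mod-2 matrix to 0 or 1 in Z.  At a vertex, the
   integer determinant of the lifted n x n minor reduces to 1 mod 2, so it is
   odd; and a 0/1 matrix of size at most 3 has determinant of absolute value at
   most 2 (already false for size 4, where 3 occurs).  Hence it is +-1. *)

Lemma natr_F2 (k : nat) : k%:R = (odd k)%:R :> 'F_2.
Proof. by rewrite -modn2 Fp_nat_mod. Qed.

Lemma intr_F2 (z : int) : z%:~R = (odd `|z|%N)%:R :> 'F_2.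
Proof.
case: z => k /=; first by rewrite -pmulrn [LHS]natr_F2.
by rewrite NegzE mulrNz -pmulrn [_ *+ _]natr_F2 /=; case: odd => //; apply/val_inj.
Qed.

Definition lift_F2 (x : 'F_2) : int := (val x)%:Z.

Lemma lift_F2K : cancel lift_F2 (fun z => z%:~R).
Proof. by case=> [[|[|//]] ?]; apply/val_inj. Qed.

Lemma lift_F2_01 (x : 'F_2) : lift_F2 x = 0 \/ lift_F2 x = 1.
Proof. by case: x => [[|[|//]] ?]; [left | right]. Qed.

Lemma odd_le2_int (d : int) : odd `|d|%N -> (`|d| <= 2)%N -> d = 1 \/ d = -1.
Proof. by case: d => [[|[|[|k]]]|[|[|k]]] //=; [left | right]. Qed.

(* Entries indexed by natural numbers, so that the indices produced by
   cofactor expansion compute to numerals and equal entries become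
   syntactically equal. *)
Definition mx_at n (B : 'M[int]_n.+1) (i j : nat) : int := B (inord i) (inord j).

Lemma mx_atE n (B : 'M[int]_n.+1) (i j : 'I_n.+1) : B i j = mx_at B i j.
Proof. by rewrite /mx_at !inord_val. Qed.

Lemma det_zero_one_le2 n (B : 'M[int]_n) : (n <= 3)%N ->
  (forall i j, B i j = 0 \/ B i j = 1) -> (`|\det B| <= 2)%N.
Proof.
case: n B => [|[|[|[|//]]]] B _ B01; first by rewrite det_mx00.
all: have {}B01 i j : mx_at B i j = 0 \/ mx_at B i j = 1 by apply: B01.
all: do ?rewrite (expand_det_row _ 0) /cofactor !big_ord_recl big_ord0.
all: rewrite ?det_mx00 ?mxE !mx_atE /= /bump /= ?(addSn, add0n).
all: repeat match goal with |- context [mx_at _ ?i ?j] =>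
       case: (B01 i j) => -> end.
all: by [].
Qed.

Theorem proposition2p17 (R : realType) (n m : nat) (A : 'M[R]_(m, n))
  (b : 'cV[R]_m) (hn : (n <= 3)%N) (hP : simple_polytope A b)
  (L : 'M['F_2]_(n, m)) (hL : real_characteristic_matrix A b L) :
  exists L' : 'M[int]_(n, m), characteristic_matrix A b L' /\ mod2_mx L' = L.
Proof.
set L' := map_mx lift_F2 L.
have L'_mod2 : mod2_mx L' = L by apply/matrixP => i j; rewrite !mxE lift_F2K.
exists L'; split => // f f_vertex.
have odd_det : odd `|\det (colsub f L')|%N.
  move: (hL f f_vertex); rewrite -L'_mod2 /mod2_mx -map_mxsub det_map_mx.
  by rewrite /= intr_F2; case: odd.
apply: odd_le2_int odd_det (det_zero_one_le2 _ hn _) => i j.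
by rewrite !mxE; apply: lift_F2_01.
Qed.
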